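(* For every $k\geq2$ and all integers $d_1,\dots,d_k\geq3$, $$R_{d_1,\dots,d_k}(W_{d_1}\otimes\cdots\otimes W_{d_k})\leq 2^{k-1}(d_1+\cdots+d_k).$$
   Context: Identify $S^d\mathbb{C}^2$ with binary forms of degree $d$ in a basis $\{x,y\}$; $W_d=x^{d-1}y$. The partially symmetric rank $R_{d_1,\dots,d_k}(T)$ of $T\in S^{d_1}\mathbb{C}^2\otimes\cdots\otimes S^{d_k}\mathbb{C}^2$ is the minimal $r$ such that $T=\sum_{i=1}^r v_{i,1}^{\otimes d_1}\otimes\cdots\otimes v_{i,k}^{\otimes d_k}$ with $v_{i,j}\in\mathbb{C}^2$. *)

From HB Require Import structures.
From mathcomp Require Import all_boot all_order all_algebra.
From mathcomp Require Import reals.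
From mathcomp.real_closed Require Import complex.
Set Implicit Arguments. Unset Strict Implicit. Unset Printing Implicit Defensive.
Import Order.TTheory GRing.Theory Num.Theory.
Local Open Scope ring_scope.

(* An element T of S^{d_1}C^2 (x) ... (x) S^{d_k}C^2 is identified with a
   multihomogeneous form in the variables (x_j, y_j), j < k, of multidegree
   (d_1,...,d_k).  It is represented by its coefficient function:
   T e is the coefficient of the monomial  prod_j x_j^(e j) * y_j^(d j - e j)
   (coefficients with e j > d j for some j are required to be 0). *)
Definition pstensor (F : fieldType) (k : nat) := ('I_k -> nat) -> F.

(* The tensor v_1^{(x)d_1} (x) ... (x) v_k^{(x)d_k}, v_j = (a_j, b_j) = a_j x + b_j y,
   i.e. the form prod_j (a_j x_j + b_j y_j)^(d_j), written coefficientwise. *)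
Definition rank1_term (F : fieldType) (k : nat) (d : 'I_k -> nat)
  (v : 'I_k -> F * F) : pstensor F k :=
  fun e => if [forall j, (e j <= d j)%N] then
             \prod_(j < k) ('C(d j, e j)%:R * (v j).1 ^+ e j * (v j).2 ^+ (d j - e j))
           else 0.

Definition ps_decomp (F : fieldType) (k : nat) (d : 'I_k -> nat)
  (T : pstensor F k) (r : nat) : Prop :=
  exists v : 'I_r -> 'I_k -> F * F,
    forall e, T e = \sum_(i < r) rank1_term d (v i) e.

Definition is_psrank (F : fieldType) (k : nat) (d : 'I_k -> nat)
  (T : pstensor F k) (r : nat) : Prop :=
  ps_decomp d T r /\ forall m, ps_decomp d T m -> (r <= m)%N.

(* W_{d_1} (x) ... (x) W_{d_k} = prod_j x_j^(d_j - 1) y_j. *)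
Definition W_tensor (F : fieldType) (k : nat) (d : 'I_k -> nat) : pstensor F k :=
  fun e => if [forall j, (e j == (d j).-1)%N] then 1 else 0.

From HB Require Import structures.
From mathcomp Require Import all_boot all_order all_algebra.
From mathcomp Require Import reals.
From mathcomp.real_closed Require Import complex.
From mathcomp Require Import zify ring.
From Stdlib Require Import Classical.
Set Implicit Arguments. Unset Strict Implicit. Unset Printing Implicit Defensive.
Import Order.TTheory GRing.Theory Num.Theory.
Local Open Scope ring_scope.

(* Weighting prod_j (x_j + s_j t y_j)^(d_j) by prod_j s_j and summing over the
   signs s in {1,-1}^k keeps exactly the monomials whose y_j-degree g_j is odd
   for every j; such a monomial carries t^(k + 2n), n = sum_j (g_j - 1)/2, and
   n <= N := (sum_j d_j - k)/2.  A combination of t = 1, ..., N+1 whose weights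
   solve a Vandermonde system in t^2 kills every n > 0 and leaves g = (1,...,1),
   i.e. 2^k (prod_j d_j) W.  Over an algebraically closed field the weights are
   absorbed into the vectors by d_j-th roots, which gives (N+1) 2^k terms, and
   (N+1) 2^k <= 2^(k-1) sum_j d_j since k >= 2. *)

Lemma psrank_exists_le (F : fieldType) (k : nat) (d : 'I_k -> nat)
    (T : pstensor F k) (n : nat) :
  ps_decomp d T n -> exists2 r, is_psrank d T r & (r <= n)%N.
Proof.
elim/ltn_ind: n => n IH Tn.
have [[m [ltmn Tm]] | nosmaller] :=
  classic (exists m, (m < n)%N /\ ps_decomp d T m).
  have [r rT lerm] := IH m ltmn Tm.
  by exists r => //; apply: leq_trans lerm (ltnW ltmn).
exists n => //; split => // m Tm; rewrite leqNgt; apply/negP => ltmn.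
by apply: nosmaller; exists m.
Qed.

Definition scale_at (C : numClosedFieldType) (k : nat) (d : 'I_k -> nat)
    (j0 : 'I_k) (c : C) (v : 'I_k -> C * C) : 'I_k -> C * C :=
  fun j => if j == j0 then ((d j0).-root c * (v j).1, (d j0).-root c * (v j).2)
           else v j.

Lemma rank1_term_scale_at (C : numClosedFieldType) (k : nat) (d : 'I_k -> nat)
    (j0 : 'I_k) (c : C) (v : 'I_k -> C * C) (e : 'I_k -> nat) :
  (0 < d j0)%N -> rank1_term d (scale_at d j0 c v) e = c * rank1_term d v e.
Proof.
move=> d0; rewrite /rank1_term; case: ifP => [/forallP le_ed|]; last by rewrite mulr0.
rewrite (bigD1 j0) // [in RHS](bigD1 j0) //= mulrA; congr (_ * _); last first.
  by apply: eq_bigr => j /negPf nj0; rewrite /scale_at nj0.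
rewrite /scale_at eqxx /= !exprMn; set rt := (d j0).-root c.
have -> : c = rt ^+ e j0 * rt ^+ (d j0 - e j0) by rewrite -exprD subnKC ?le_ed // rootCK.
ring.
Qed.

Lemma ps_decomp_lincomb (C : numClosedFieldType) (k : nat) (d : 'I_k -> nat)
    (j0 : 'I_k) (T : pstensor C k) (I : finType) (c : I -> C)
    (v : I -> 'I_k -> C * C) :
  (0 < d j0)%N -> (forall e, T e = \sum_(i : I) c i * rank1_term d (v i) e) ->
  ps_decomp d T #|I|.
Proof.
move=> d0 Tc; exists (fun i => scale_at d j0 (c (enum_val i)) (v (enum_val i))) => e.
rewrite Tc (big_enum_val (A := predT)) /=.
by apply: eq_bigr => i _; rewrite rank1_term_scale_at.
Qed.

Lemma rank1_sign_average (F : fieldType) (k : nat) (d e : 'I_k -> nat) (t : F) :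
  \sum_(s : {ffun 'I_k -> bool})
     (\prod_j (-1) ^+ s j) * rank1_term d (fun j => (1, (-1) ^+ s j * t)) e
  = \prod_j ('C(d j, e j)%:R * t ^+ (d j - e j) * (1 - (-1) ^+ (d j - e j))).
Proof.
rewrite /rank1_term; have [le_ed | /forallPn[j]] := boolP [forall j, (e j <= d j)%N]; last first.
  rewrite -ltnNge => /bin_small Cj0.
  by rewrite [RHS](bigD1 j) //= Cj0 !mul0r big1 // => s _; rewrite mulr0.
rewrite (eq_bigr (fun j => \sum_(b : bool) (-1) ^+ b *
    ('C(d j, e j)%:R * 1 ^+ e j * ((-1) ^+ b * t) ^+ (d j - e j)))); last first.
  move=> j _; rewrite big_bool /= expr1n expr1 expr0 !mul1r exprMn.
  by move: ('C(_, _)%:R) (t ^+ _) ((-1) ^+ _) => c x y; ring.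
by rewrite [RHS]bigA_distr_bigA; apply: eq_bigr => s _; rewrite [RHS]big_split.
Qed.

Lemma prod_odd_parts (R : comRingType) (k : nat) (c : 'I_k -> R)
    (g : 'I_k -> nat) (t : R) :
  \prod_j (c j * t ^+ g j * (1 - (-1) ^+ g j))
  = [forall j, odd (g j)]%:R * (2 ^+ k * \prod_j c j * t ^+ (\sum_j g j)).
Proof.
have [/forallP godd | /forallPn[j geven]] := boolP [forall j, odd (g j)].
  rewrite mul1r (eq_bigr (fun j => 2 * (c j * t ^+ g j))); last first.
    by move=> j _; rewrite -signr_odd godd opprK mulrC.
  by rewrite !big_split /= prodr_const card_ord prodrXr mulrA.
by rewrite mul0r (bigD1 j) //= -signr_odd (negbTE geven) subrr mulr0 mul0r.
Qed.

Lemma sum_odd_nat (k : nat) (g : 'I_k -> nat) :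
  (forall j, odd (g j)) -> (\sum_j g j = k + (\sum_j (g j)./2).*2)%N.
Proof.
move=> godd; rewrite (eq_bigr (fun j => 1 + ((g j)./2).*2)%N); last first.
  by move=> j _; rewrite -{1}(odd_double_half (g j)) godd.
by rewrite big_split /= sum1_card card_ord (big_morph double doubleD double0).
Qed.

Lemma even_moment_weights (C : numFieldType) (N k : nat) :
  exists w : 'I_N.+1 -> C, forall n, (n <= N)%N ->
    \sum_(m < N.+1) w m * m.+1%:R ^+ (k + n.*2) = (n == 0)%:R.
Proof.
pose s : 'rV[C]_N.+1 := \row_(m < N.+1) (m.+1 ^ 2)%N%:R.
pose V := Vandermonde N.+1 s.
have V_unit : V \in unitmx.
  rewrite unitmxE det_Vandermonde unitfE; apply/prodf_neq0 => i _.
  apply/prodf_neq0 => j lt_ij; rewrite !mxE -natrB; last by rewrite leq_exp2r // ltnW.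
  by rewrite pnatr_eq0 subn_eq0 -ltnNge ltn_exp2r.
pose u : 'cV[C]_N.+1 := invmx V *m delta_mx 0 0.
have Vu : V *m u = delta_mx 0 0 by rewrite mulmxA mulmxV // mul1mx.
exists (fun m => u m 0 / m.+1%:R ^+ k) => n le_nN.
have := congr1 (fun A : 'cV[C]_N.+1 => A (Ordinal (le_nN : (n < N.+1)%N)) 0) Vu.
rewrite !mxE /= andbT => <-; apply: eq_bigr => m _.
rewrite !mxE exprD mulrA divfK ?expf_neq0 ?pnatr_eq0 //.
by rewrite mulrC -!natrX -expnM mulnC -muln2.
Qed.

Lemma W_tensorE (F : fieldType) (k : nat) (d e : 'I_k -> nat) :
  (forall j, 0 < d j)%N -> W_tensor F d e = [forall j, d j - e j == 1]%N%:R.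
Proof.
move=> d_gt0; rewrite /W_tensor.
have -> : [forall j, e j == (d j).-1] = [forall j, d j - e j == 1]%N.
  by apply: eq_forallb => j; apply/eqP/eqP; have := d_gt0 j; lia.
by case: [forall _, _].
Qed.

Lemma weighted_sign_average (F : fieldType) (k : nat) (d : 'I_k -> nat)
    (N : nat) (w : 'I_N.+1 -> F) :
  (forall j, 0 < d j)%N -> ((\sum_j d j - k)./2 <= N)%N ->
  (forall n, (n <= N)%N ->
     \sum_(m < N.+1) w m * m.+1%:R ^+ (k + n.*2) = (n == 0)%:R) ->
  forall e, \sum_(m < N.+1) w m * \sum_(s : {ffun 'I_k -> bool})
      (\prod_j (-1) ^+ s j) * rank1_term d (fun j => (1, (-1) ^+ s j * m.+1%:R)) e
    = (2 ^ k * \prod_j d j)%N%:R * W_tensor F d e.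
Proof.
move=> d_gt0 le_DN w_moments e; rewrite W_tensorE //.
pose g j := (d j - e j)%N.
rewrite (eq_bigr (fun m : 'I_N.+1 => [forall j, odd (g j)]%:R *
   (2 ^+ k * \prod_j 'C(d j, e j)%:R) * (w m * m.+1%:R ^+ (\sum_j g j)))); last first.
  by move=> m _; rewrite rank1_sign_average prod_odd_parts; ring.
rewrite -mulr_sumr.
have [/forallP g_odd | g_even] := boolP [forall j, odd (g j)]; last first.
  have/negPf-> : ~~ [forall j, d j - e j == 1]%N.
    by apply: contra g_even => /forallP g1; apply/forallP => j; rewrite /g (eqP (g1 j)).
  by rewrite !mul0r mulr0.
rewrite sum_odd_nat // w_moments; last first.
  have : (\sum_j g j <= \sum_j d j)%N by apply: leq_sum => j _; apply: leq_subr.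
  by rewrite sum_odd_nat //; lia.
have g1E : [forall j, d j - e j == 1]%N = (\sum_j (g j)./2 == 0)%N.
  rewrite sum_nat_eq0; apply: eq_forallb => j.
  by rewrite -[(d j - e j)%N]odd_double_half g_odd; case: (_./2).
rewrite -g1E; have [/forallP g1 | _] := boolP [forall j, d j - e j == 1]%N; last by rewrite !mulr0.
rewrite /= !mulr1n mul1r natrM natrX natr_prod; congr (_ * _ * _).
apply: eq_bigr => j _.
have -> : e j = (d j - 1)%N by move: (g1 j) (d_gt0 j); lia.
by rewrite bin_sub ?bin1.
Qed.

Lemma W_tensor_decomp (C : numClosedFieldType) (k : nat) (d : 'I_k -> nat) :
  (0 < k)%N -> (forall j, 0 < d j)%N ->
  ps_decomp d (W_tensor C d) (((\sum_j d j - k)./2).+1 * 2 ^ k)%N.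
Proof.
move=> k_gt0 d_gt0; set N := (_./2)%N.
have [w w_moments] := even_moment_weights C N k.
pose K : C := (2 ^ k * \prod_j d j)%N%:R.
have K_neq0 : K != 0 by rewrite pnatr_eq0 -lt0n muln_gt0 expn_gt0 prodn_gt0.
pose I := ('I_N.+1 * {ffun 'I_k -> bool})%type.
have -> : (N.+1 * 2 ^ k)%N = #|{: I}| by rewrite card_prod card_ord card_ffun card_bool card_ord.
apply: (@ps_decomp_lincomb _ _ _ (Ordinal k_gt0) _ _
  (fun p : I => w p.1 * (\prod_j (-1) ^+ p.2 j) / K)
  (fun p : I => fun j => (1, (-1) ^+ p.2 j * p.1.+1%:R))) => // e.
apply: (mulIf K_neq0); rewrite mulrC -(weighted_sign_average _ _ w_moments) //.
rewrite mulr_suml; under eq_bigr => m _ do rewrite mulr_sumr.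
rewrite pair_bigA /=; apply: eq_bigr => p _.
by rewrite [RHS]mulrAC divfK // mulrA.
Qed.

Lemma half_sub_exp2_bound (D k : nat) :
  (2 <= k <= D)%N -> (((D - k)./2).+1 * 2 ^ k <= 2 ^ k.-1 * D)%N.
Proof.
case/andP=> le2k lekD; rewrite -[in (2 ^ k)%N](prednK (ltnW le2k)) expnS.
rewrite mulnA [(2 ^ _ * _)%N]mulnC leq_mul2r; apply/orP; right.
have : (((D - k)./2).*2 <= D - k)%N by rewrite -geq_half_double.
lia.
Qed.

Theorem theorem3p6 (R : realType) (k : nat) (hk : (2 <= k)%N)
  (d : 'I_k -> nat) (hd : forall j, (3 <= d j)%N) :
  exists r : nat, @is_psrank R[i] k d (@W_tensor R[i] k d) r /\
    (r <= 2 ^ k.-1 * \sum_(j < k) d j)%N.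
Proof.
have d_gt0 j : (0 < d j)%N by apply: leq_trans (hd j).
have [r rank_r le_r] := psrank_exists_le (W_tensor_decomp R[i] (ltnW hk) d_gt0).
exists r; split => //; apply: leq_trans le_r (half_sub_exp2_bound _).
rewrite hk -[X in (X <= _)%N]card_ord -sum1_card.
by apply: leq_sum => j _; apply: d_gt0.
Qed.
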